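(* Every $L_1$-embeddable diversity can be isometrically embedded in a measure diversity.
   Context: A diversity on a set $X$ is a function $\delta$ from finite subsets of $X$ to $\mathbb{R}$ with $\delta(A)\ge 0$, $\delta(A)=0$ whenever $|A|\le 1$ (values $0$ on larger sets are allowed), and $\delta(A\cup B)+\delta(B\cup C)\ge\delta(A\cup C)$ for all finite $A,B,C$ with $B\neq\emptyset$. For a measure space $(\Omega,\mathcal{A},\mu)$, the $L_1$ diversity is $(L_1(\Omega,\mu),\delta_1)$ with $\delta_1(F)=\int_\Omega\max\{|f(\omega)-g(\omega)|:f,g\in F\}\,d\mu(\omega)$ for finite $F$. A diversity $(X,\delta)$ is $L_1$-embeddable if there is a map $\phi$ from $X$ into some $L_1$ diversity with $\delta_1(\phi(A))=\delta(A)$ for all finite $A\subseteq X$ (an isometric embedding). Measure diversity: for a measure space $(M,\Sigma,\mu)$, the set is the collection of sets in $\Sigma$ of finite measure and $\delta(\{E_1,\dots,E_k\})=\mu(\bigcup_iE_i\setminus\bigcap_iE_i)$. *)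

From HB Require Import structures.
From mathcomp Require Import all_boot all_order all_algebra.
From mathcomp Require Import finmap.
From mathcomp Require Import all_classical all_reals all_analysis.
Set Implicit Arguments. Unset Strict Implicit. Unset Printing Implicit Defensive.
Import Order.TTheory GRing.Theory Num.Theory.
Local Open Scope classical_set_scope.
Local Open Scope ring_scope.

Definition is_diversity (R : realType) (X : choiceType) (delta : {fset X} -> R) : Prop :=
  (forall A : {fset X}, 0 <= delta A) /\
  (forall A : {fset X}, (#|` A| <= 1)%N -> delta A = 0) /\
  (forall A B C : {fset X}, B != fset0%fset ->
      delta (A `|` C)%fset <= delta (A `|` B)%fset + delta (B `|` C)%fset).

Definition L1_maxdiff (R : realType) (X : choiceType) (Om : Type)
  (phi : X -> Om -> R) (A : {fset X}) (w : Om) : R :=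
  \big[Num.max/0]_(x <- A) \big[Num.max/0]_(y <- A) `|phi x w - phi y w|.

(* (X, delta) is L1-embeddable: there is a measure space (Om, mu) and a map
   phi : X -> L1(Om, mu) (given by integrable representatives) with
   delta_1(phi(A)) = delta(A) for all finite A. *)
Definition L1_embeddable (R : realType) (X : choiceType) (delta : {fset X} -> R) : Prop :=
  exists (d : measure_display) (Om : measurableType d)
         (mu : {measure set Om -> \bar R}) (phi : X -> Om -> R),
    (forall x, mu.-integrable setT (EFin \o phi x)) /\
    (forall A : {fset X},
        ((delta A)%:E = \int[mu]_(w in setT) (L1_maxdiff phi A w)%:E)%E).

Definition measure_div (d : measure_display) (T : measurableType d) (R : realType)
  (mu : {measure set T -> \bar R}) (X : choiceType) (E : X -> set T) (A : {fset X})
  : \bar R :=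
  mu ((\bigcup_(x in [set x | x \in A]) E x) `\` (\bigcap_(x in [set x | x \in A]) E x)).

Definition measure_div_embeddable (R : realType) (X : choiceType)
  (delta : {fset X} -> R) : Prop :=
  exists (d : measure_display) (T : measurableType d)
         (mu : {measure set T -> \bar R}) (E : X -> set T),
    (forall x, measurable (E x) /\ (mu (E x) < +oo)%E) /\
    (forall A : {fset X}, measure_div mu E A = (delta A)%:E).

From HB Require Import structures.
From mathcomp Require Import all_boot all_order all_algebra.
From mathcomp Require Import finmap.
From mathcomp Require Import all_classical all_reals all_analysis.
From mathcomp Require Import lra measurable_realfun.
Set Implicit Arguments. Unset Strict Implicit. Unset Printing Implicit Defensive.
Import Order.TTheory GRing.Theory Num.Theory.
Local Open Scope classical_set_scope.
Local Open Scope ring_scope.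

(* Send f in L1(mu) to the region between the axis and the graph of f,
   E_f = {(w, t) | t lies in [min(0, f w), max(0, f w))}, a subset of
   Om x R of (mu x Lebesgue)-measure \int |f|.  For finitely many functions,
   the union minus the intersection of the sections at w of their regions is
   the interval [min_x f_x(w), max_x f_x(w)), whose length is
   max_{x,y} |f_x(w) - f_y(w)|; integrating over w gives delta_1. *)

Section IntervalFromZero.
Context (R : realDomainType).

Definition itv0 (v : R) : set R := [set` `[Num.min 0 v, Num.max 0 v[].

Lemma itv0E (v t : R) : itv0 v t = (if 0 <= t then t < v else v <= t) :> Prop.
Proof.
rewrite /itv0 /= in_itv /=; congr is_true.
case: (lerP 0 v) => v0; case: (lerP 0 t) => t0 /=.
all: rewrite ?(min_l v0) ?(max_r v0) ?(min_r (ltW v0)) ?(max_l (ltW v0)) ?t0 /=.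
- by [].
- by apply/esym/negbTE; rewrite -ltNge; lra.
- by rewrite andbF; apply/esym/negbTE; rewrite -leNgt; lra.
- by rewrite andbT.
Qed.

Lemma bigcup_itv0D_bigcap (I : Type) (P : set I) (g : I -> R) (i1 i2 : I) :
  P i1 -> P i2 -> (forall i, P i -> g i1 <= g i <= g i2) ->
  \bigcup_(i in P) itv0 (g i) `\` \bigcap_(i in P) itv0 (g i) =
  [set` `[g i1, g i2[].
Proof.
move=> Pi1 Pi2 gB; apply/seteqP; split => t; rewrite /= in_itv /=.
- move=> [[i Pi]] + /existsNP[j /not_implyP[Pj]].
  move: (gB _ Pi) (gB _ Pj); rewrite !itv0E.
  case: ifP => t0 /andP[? ?] /andP[? ?] ti /negP; rewrite -?leNgt -?ltNge => ?;
    by apply/andP; split; lra.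
- move=> /andP[t1 t2]; case: (lerP 0 t) => t0.
  + split; first by exists i2; rewrite // itv0E t0.
    by move=> /(_ _ Pi1); rewrite itv0E t0 => ?; lra.
  + split; first by exists i1; rewrite // itv0E (lt_geF t0).
    by move=> /(_ _ Pi2); rewrite itv0E (lt_geF t0) => ?; lra.
Qed.

End IntervalFromZero.

Section LebesgueMeasureItv.
Context (R : realType).

Lemma lebesgue_measure_itv_co (a b : R) :
  a <= b -> lebesgue_measure [set` `[a, b[] = (b - a)%:E.
Proof.
rewrite lebesgue_measure_itv /= lte_fin le_eqVlt => /orP[/eqP ->|->//].
by rewrite ltxx subrr.
Qed.

Lemma lebesgue_measure_itv0 (v : R) : lebesgue_measure (itv0 v) = `|v|%:E.
Proof.
rewrite lebesgue_measure_itv_co; last by rewrite ge_min !le_max !lexx.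
rewrite minEle maxEle; case: lerP => v0.
- by rewrite subr0 ger0_norm.
- by rewrite sub0r ltr0_norm.
Qed.

End LebesgueMeasureItv.

Lemma seq_arg_max (disp : Order.disp_t) (T : orderType disp) (I : eqType)
    (g : I -> T) (s : seq I) (i0 : I) :
  i0 \in s -> exists2 i, i \in s & forall j, j \in s -> (g j <= g i)%O.
Proof.
elim: s i0 => // a s IH _ _; case: s IH => [_|b s IH].
  by exists a => [|j]; rewrite ?mem_head // inE => /eqP ->.
have [i is_ ih] := IH b (mem_head _ _).
have [gai|gia] := leP (g a) (g i).
  by exists i => [|j]; rewrite inE ?is_ ?orbT // => /orP[/eqP ->|/ih].
exists a => [|j]; rewrite ?mem_head // inE => /orP[/eqP ->//|/ih gji].
exact: le_trans gji (ltW gia).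
Qed.

Lemma bigmax_absdiff (R : realDomainType) (I : eqType) (g : I -> R) (s : seq I)
    (i1 i2 : I) :
  i1 \in s -> i2 \in s -> (forall j, j \in s -> g i1 <= g j <= g i2) ->
  \big[Num.max/0]_(x <- s) \big[Num.max/0]_(y <- s) `|g x - g y| = g i2 - g i1.
Proof.
move=> i1s i2s gB; apply/le_anti/andP; split.
- have g12 : 0 <= g i2 - g i1 by move: (gB _ i1s) => /andP[]; lra.
  rewrite big_seq; apply: bigmax_le => // x xs.
  rewrite big_seq; apply: bigmax_le => // y ys.
  move: (gB _ xs) (gB _ ys) => /andP[? ?] /andP[? ?].
  by rewrite ler_norml; apply/andP; split; lra.
- apply: (@bigmax_sup_seq _ _ _ _ _ i2) => //.
  apply: (@bigmax_sup_seq _ _ _ _ _ i1) => //.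
  exact: ler_norm.
Qed.

Section GraphRegion.
Context (d : measure_display) (T : measurableType d) (R : realType).
Context (mu : {measure set T -> \bar R}).
Local Notation mu_x_lam := (mu \x lebesgue_measure : {measure set _ -> \bar R})%E.

Definition graph_region (f : T -> R) : set (T * R) :=
  [set p | itv0 (f p.1) p.2].

Lemma xsection_graph_region (f : T -> R) (w : T) :
  xsection (graph_region f) w = itv0 (f w).
Proof. by apply/seteqP; split => t; rewrite /xsection /= inE. Qed.

Lemma measurable_graph_region (f : T -> R) :
  measurable_fun setT f -> measurable (graph_region f).
Proof.
move=> mf; have mf1 : measurable_fun setT (f \o fst : T * R -> R).
  exact: measurableT_comp mf measurable_fst.
have mlo := measurable_fun_le measurableT
  (measurable_minr (measurable_cst (0 : R)) mf1) measurable_snd.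
have mhi := measurable_fun_le measurableT
  (measurable_maxr (measurable_cst (0 : R)) mf1) measurable_snd.
congr measurable: (measurableD mlo mhi).
apply/seteqP; split => p; rewrite /graph_region /itv0 /= in_itv /=.
- by move=> [[_ ->]] hi; rewrite ltNge; apply/negP => ?; apply: hi.
- by move=> /andP[lo hi]; split=> // -[_]; rewrite leNgt hi.
Qed.

Lemma product_measure_graph_region (f : T -> R) :
  mu_x_lam (graph_region f) = (\int[mu]_w `|f w|%:E)%E.
Proof.
apply: eq_integral => w _.
by rewrite /= (xsection_graph_region f w) lebesgue_measure_itv0.
Qed.

Lemma measure_div_graph_region (X : choiceType) (phi : X -> T -> R)
    (A : {fset X}) :
  measure_div mu_x_lam (fun x => graph_region (phi x)) A =
  (\int[mu]_w (L1_maxdiff phi A w)%:E)%E.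
Proof.
apply: eq_integral => w _ /=.
rewrite (_ : xsection _ w = \bigcup_(x in [set` A]) itv0 (phi x w) `\`
                            \bigcap_(x in [set` A]) itv0 (phi x w)); last first.
  by apply/seteqP; split => t; rewrite /xsection /= inE.
rewrite /L1_maxdiff; have [->|[x0 x0A]] := fset_0Vmem A.
  rewrite set_fset0 bigcup_set0 set0D measure0.
  by rewrite (_ : (fset0 : seq X) = [::]) // big_nil.
have [i2 i2A i2max] := seq_arg_max (fun x => phi x w) x0A.
have [i1 i1A i1min] := seq_arg_max (fun x => - phi x w) x0A.
have phiB x : x \in A -> phi i1 w <= phi x w <= phi i2 w.
  by move=> xA; rewrite i2max // andbT -lerN2 i1min.
rewrite (bigcup_itv0D_bigcap (i1:=i1) (i2:=i2)) //.
rewrite (bigmax_absdiff i1A i2A phiB) lebesgue_measure_itv_co //.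
by case/andP: (phiB _ i1A).
Qed.

End GraphRegion.

Theorem proposition8 (R : realType) (X : choiceType) (delta : {fset X} -> R) :
  is_diversity delta -> L1_embeddable delta -> measure_div_embeddable delta.
Proof.
move=> _ [d [Om [mu [phi [phi_int phi_iso]]]]].
have phi_meas x : measurable_fun setT (phi x).
  by apply/measurable_EFinP; case/integrableP: (phi_int x).
exists _, _, (mu \x lebesgue_measure)%E, (fun x => graph_region (phi x)); split.
- move=> x; split; first exact: measurable_graph_region (phi_meas x).
  by rewrite product_measure_graph_region; case/integrableP: (phi_int x).
- by move=> A; rewrite measure_div_graph_region -phi_iso.
Qed.
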